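(* Let $\mathcal{B},\mathcal{B}'$ be differential bigraded algebras over $\mathcal{I}$, let $\widehat{A},\widehat{A}'$ be differential bigraded right $\mathcal{B}$-modules, each free over $\mathbb{Z}$ with a basis of bigrading-homogeneous elements having unique right idempotents, and let $\widehat{DD}$ be a rank-one Type DD bimodule over $\mathcal{B}$ and $\mathcal{B}'$ with $\delta_{DD}(1)=\sum_sa_s\otimes c_s^{op}$. Let $F:\widehat{A}\to\widehat{A}'$ be an $\mathcal{A}_\infty$-morphism with $F_n=0$ for $n>2$. Define $F\boxtimes\mathrm{id}_{DD}:\widehat{A}\to\mathcal{B}'\otimes_{\mathcal{I}}\widehat{A}'$ by \[ (F\boxtimes\mathrm{id}_{DD})(x)=1\otimes F_1(x)+\sum_s(-1)^{\deg_h(c_s)\,(1+\deg_h F_2(x\otimes a_s))}\,c_s\otimes F_2(x\otimes a_s). \] Then $F\boxtimes\mathrm{id}_{DD}$ is a morphism of Type D structures from $\widehat{A}\boxtimes\widehat{DD}$ to $\widehat{A}'\boxtimes\widehat{DD}$.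
   Context: $\mathcal{I}=\mathbb{Z}e_1\times\cdots\times\mathbb{Z}e_k$. Differential bigraded algebras over $\mathcal{I}$: unital associative, bigraded (intrinsic, homological $=\deg_h$), degree-$(0,0)$ part $\mathcal{I}$, differential $\mu_1$ of bidegree $(0,1)$, $\mu_1^2=0$, $\mu_1(xy)=(-1)^{\deg_hy}\mu_1(x)y+x\mu_1(y)$; multiplication $\mu_2$. Right dg module: differential $m_1$ of bidegree $(0,1)$, $m_1^2=0$, $m_1(xb)=(-1)^{\deg_hb}m_1(x)b+x\mu_1(b)$; action $m_2$ (primes for $\widehat{A}'$). $|\mathrm{id}|$ multiplies by $(-1)^{\deg_h}$. Rank-one Type DD bimodule: $\widehat{DD}=\mathcal{I}$ with $\mathcal{I}$-bilinear $\delta_{DD}:\mathcal{I}\to\mathcal{B}\otimes_{\mathcal{I}}(\mathcal{B}')^{op}$ of bidegree $(0,1)$ satisfying, for $\delta_{DD}(1)=\sum_sa_s\otimes c_s^{op}$: $\sum_s(-1)^{\deg_hc_s}\mu_1(a_s)\otimes c_s^{op}+\sum_sa_s\otimes\mu_1(c_s)^{op}+\sum_{s,t}(-1)^{\deg_h(a_t)\deg_h(c_s)}a_sa_t\otimes c_t^{op}c_s^{op}=0$. The Type D structure $\widehat{A}\boxtimes\widehat{DD}$ over $\mathcal{B}'$ is $\widehat{A}$ (as left $\mathcal{I}$-module via its right action) with $\delta(x)=1\otimes m_1(x)+\sum_s(-1)^{\deg_h(xa_s)\deg_h(c_s)}c_s\otimes xa_s$; similarly for $\widehat{A}'$ with $\delta'$.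 An $\mathcal{A}_\infty$-morphism $F$ with $F_n=0$ for $n>2$ consists of a bigrading-preserving $\mathcal{I}$-linear $F_1:\widehat{A}\to\widehat{A}'$ and an $\mathcal{I}$-linear $F_2:\widehat{A}\otimes_{\mathcal{I}}\mathcal{B}\to\widehat{A}'$ preserving intrinsic degree and lowering homological degree by $1$, with $m_1'F_1=F_1m_1$; $m_1'F_2+m_2'(F_1\otimes\mathrm{id})=F_1m_2-F_2(m_1\otimes|\mathrm{id}|)-F_2(\mathrm{id}\otimes\mu_1)$; $-m_2'(F_2\otimes|\mathrm{id}|)=F_2(m_2\otimes\mathrm{id})-F_2(\mathrm{id}\otimes\mu_2)$. A morphism of Type D structures $(D,\delta)\to(D',\delta')$ over $\mathcal{B}'$ is a bigrading-preserving $\mathcal{I}$-linear $\Phi:D\to\mathcal{B}'\otimes_{\mathcal{I}}D'$ with $(\mu_1\otimes|\mathrm{id}|)\Phi=(\mu_2\otimes\mathrm{id})(\mathrm{id}\otimes\Phi)\delta-(\mu_2\otimes\mathrm{id})(\mathrm{id}\otimes\delta')\Phi$. *)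

From HB Require Import structures.
From mathcomp Require Import all_boot all_order all_algebra.
From Stdlib Require List.
Set Implicit Arguments. Unset Strict Implicit. Unset Printing Implicit Defensive.
Import Order.TTheory GRing.Theory Num.Theory.
Local Open Scope ring_scope.

(* Conventions: the ring of idempotents I = Z e_1 x ... x Z e_k is indexed by
   'I_k.  The intrinsic grading takes values in an abelian group Gi, the
   homological grading in int.  A bigraded abelian group is a zmodType M with
   predicates [hom g h x] ("x is homogeneous of bidegree (g,h)") making M the
   direct sum of the subgroups [hom g h]. *)

Section Defs.
Variables (k : nat) (Gi : zmodType).

Definition zsign (n : int) : int := (-1) ^+ `|n|%N.

Definition is_graded (M : zmodType) (hom : Gi -> int -> M -> Prop) : Prop :=
  (forall g h, hom g h 0) /\
  (forall g h x y, hom g h x -> hom g h y -> hom g h (x - y)) /\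
  (forall x : M, exists s : seq ((Gi * int) * M),
       (forall p, p \in s -> hom p.1.1 p.1.2 p.2) /\ x = \sum_(p <- s) p.2) /\
  (forall s : seq ((Gi * int) * M), uniq (map fst s) ->
       (forall p, p \in s -> hom p.1.1 p.1.2 p.2) ->
       \sum_(p <- s) p.2 = 0 -> forall p, p \in s -> p.2 = 0).

Definition is_dg_algebra (B : pzRingType) (e : 'I_k -> B)
    (hom : Gi -> int -> B -> Prop) (mu1 : B -> B) : Prop :=
  is_graded hom /\
  (forall g h g' h' x y, hom g h x -> hom g' h' y -> hom (g + g') (h + h') (x * y)) /\
  (* the degree (0,0) part is I = Z e_1 x ... x Z e_k *)
  (forall i j, e i * e j = if i == j then e i else 0) /\
  (\sum_i e i = 1) /\
  (forall x, hom 0 0 x <-> exists n : 'I_k -> int, x = \sum_i e i *~ n i) /\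
  (forall n : 'I_k -> int, \sum_i e i *~ n i = 0 -> forall i, n i = 0) /\
  (forall x y, mu1 (x - y) = mu1 x - mu1 y) /\
  (forall g h x, hom g h x -> hom g (h + 1) (mu1 x)) /\
  (forall x, mu1 (mu1 x) = 0) /\
  (forall g h x y, hom g h y -> mu1 (x * y) = mu1 x * y *~ zsign h + x * mu1 y).

Unset Implicit Arguments.
Record dgAlgebra := DGAlgebra {
  dga_car :> pzRingType;
  dga_e : 'I_k -> dga_car;
  dga_hom : Gi -> int -> dga_car -> Prop;
  dga_mu1 : dga_car -> dga_car;
  dga_ax : is_dg_algebra dga_e dga_hom dga_mu1 }.
Set Implicit Arguments.

Definition is_dg_module (B : dgAlgebra) (A : zmodType) (m2 : A -> B -> A)
    (hom : Gi -> int -> A -> Prop) (m1 : A -> A) : Prop :=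
  is_graded hom /\
  (forall x y b, m2 (x - y) b = m2 x b - m2 y b) /\
  (forall x a b, m2 x (a - b) = m2 x a - m2 x b) /\
  (forall x, m2 x 1 = x) /\
  (forall x a b, m2 (m2 x a) b = m2 x (a * b)) /\
  (forall g h g' h' x b, hom g h x -> dga_hom B g' h' b ->
       hom (g + g') (h + h') (m2 x b)) /\
  (forall x y, m1 (x - y) = m1 x - m1 y) /\
  (forall g h x, hom g h x -> hom g (h + 1) (m1 x)) /\
  (forall x, m1 (m1 x) = 0) /\
  (forall g h x b, dga_hom B g h b ->
       m1 (m2 x b) = m2 (m1 x) b *~ zsign h + m2 x (dga_mu1 B b)).

Definition free_homog_basis (B : dgAlgebra) (A : zmodType) (m2 : A -> B -> A)
    (hom : Gi -> int -> A -> Prop) : Prop :=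
  exists (J : eqType) (v : J -> A),
    (forall j, exists g h, hom g h (v j)) /\
    (forall j, exists! i, m2 (v j) (dga_e B i) = v j) /\
    (forall x, exists s : seq (J * int), x = \sum_(p <- s) v p.1 *~ p.2) /\
    (forall (s : seq J) (c : J -> int), uniq s ->
       \sum_(j <- s) v j *~ c j = 0 -> forall j, j \in s -> c j = 0).

Unset Implicit Arguments.
Record dgModule (B : dgAlgebra) := DGModule {
  dgm_car :> zmodType;
  dgm_act : dgm_car -> B -> dgm_car;
  dgm_hom : Gi -> int -> dgm_car -> Prop;
  dgm_m1 : dgm_car -> dgm_car;
  dgm_ax : is_dg_module dgm_act dgm_hom dgm_m1;
  dgm_free : free_homog_basis dgm_act dgm_hom }.
Arguments dgm_act {B} d _ _.
Arguments dgm_hom {B} d _ _ _.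
Arguments dgm_m1 {B} d _.
Set Implicit Arguments.

(* M is a right I-module (actM i x = x.e_i), N a left
   I-module (actN i y = e_i.y).  A formal sum s of pure tensors is zero in
   M (x)_I N iff it is killed by every I-balanced biadditive map. *)
Definition tensor_zero (M N : zmodType) (actM : 'I_k -> M -> M)
    (actN : 'I_k -> N -> N) (s : seq (M * N)) : Prop :=
  forall (G : zmodType) (phi : M -> N -> G),
    (forall x y z, phi (x - y) z = phi x z - phi y z) ->
    (forall x y z, phi x (y - z) = phi x y - phi x z) ->
    (forall i x y, phi (actM i x) y = phi x (actN i y)) ->
    \sum_(p <- s) phi p.1 p.2 = 0.

Definition tensor_eq (M N : zmodType) (actM : 'I_k -> M -> M)
    (actN : 'I_k -> N -> N) (s t : seq (M * N)) : Prop :=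
  tensor_zero actM actN (s ++ [seq (- p.1, p.2) | p <- t]).

Definition tensor_homog (M N : zmodType) (actM : 'I_k -> M -> M)
    (actN : 'I_k -> N -> N) (homM : Gi -> int -> M -> Prop)
    (homN : Gi -> int -> N -> Prop) (g : Gi) (h : int) (t : seq (M * N)) : Prop :=
  exists s : seq ((M * N) * ((Gi * int) * (Gi * int))),
    (forall p, List.In p s ->
        [/\ homM p.2.1.1 p.2.1.2 p.1.1, homN p.2.2.1 p.2.2.2 p.1.2,
            p.2.1.1 + p.2.2.1 = g & p.2.1.2 + p.2.2.2 = h]) /\
    tensor_eq actM actN t (map fst s).

(* A term a_s (x) c_s^op of delta_DD(1), with bidegrees of a_s and c_s. *)
Record ddterm (B B' : dgAlgebra) := DDTerm {
  dd_a : B; dd_c : B';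
  dd_ga : Gi; dd_ha : int; dd_gc : Gi; dd_hc : int }.

Section TypeDD.
Variables (B B' : dgAlgebra).

(* B (x)_I (B')^op : right I-action on B, left I-action on (B')^op is
   e.c^op = (c e)^op. *)
Definition actR (C : dgAlgebra) (i : 'I_k) (a : C) : C := a * dga_e C i.

Definition is_DD (dd : seq (ddterm B B')) : Prop :=
  (forall t, List.In t dd ->
     [/\ dga_hom B (dd_ga t) (dd_ha t) (dd_a t),
         dga_hom B' (dd_gc t) (dd_hc t) (dd_c t),
         dd_ga t + dd_gc t = 0 & dd_ha t + dd_hc t = 1]) /\
  (* I-bilinearity of delta_DD : e_i . delta(1) = delta(1) . e_i *)
  (forall i, tensor_eq (@actR B) (@actR B')
       [seq (dga_e B i * dd_a t, dd_c t) | t <- dd]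
       [seq (dd_a t, dga_e B' i * dd_c t) | t <- dd]) /\
  (* the structure equation; note c_t^op c_s^op = (c_s c_t)^op *)
  tensor_zero (@actR B) (@actR B')
    ([seq (dga_mu1 B (dd_a t) *~ zsign (dd_hc t), dd_c t) | t <- dd] ++
     [seq (dd_a t, dga_mu1 B' (dd_c t)) | t <- dd] ++
     [seq (dd_a s * dd_a t *~ zsign (dd_ha t * dd_hc s), dd_c s * dd_c t)
        | s <- dd, t <- dd]).

(* Type D structure A [box] DD over B', evaluated at x homogeneous of
   homological degree h; each term carries the homological degree of its
   A-component. *)
Definition deltaD (dd : seq (ddterm B B')) (A : dgModule B) (h : int) (x : A)
    : seq ((B' * A) * int) :=
  ((1, dgm_m1 A x), h + 1) ::
  [seq ((dd_c t *~ zsign ((h + dd_ha t) * dd_hc t), dgm_act A x (dd_a t)),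
        h + dd_ha t) | t <- dd].

End TypeDD.

Definition is_Ainf_morphism (B : dgAlgebra) (A A' : dgModule B)
    (F1 : A -> A') (F2 : A -> B -> A') : Prop :=
  (forall x y, F1 (x - y) = F1 x - F1 y) /\
  (forall g h x, dgm_hom A g h x -> dgm_hom A' g h (F1 x)) /\
  (forall i x, F1 (dgm_act A x (dga_e B i)) = dgm_act A' (F1 x) (dga_e B i)) /\
  (forall x y b, F2 (x - y) b = F2 x b - F2 y b) /\
  (forall x a b, F2 x (a - b) = F2 x a - F2 x b) /\
  (forall i x b, F2 (dgm_act A x (dga_e B i)) b = F2 x (dga_e B i * b)) /\
  (forall i x b, F2 x (b * dga_e B i) = dgm_act A' (F2 x b) (dga_e B i)) /\
  (forall g h g' h' x b, dgm_hom A g h x -> dga_hom B g' h' b ->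
      dgm_hom A' (g + g') (h + h' - 1) (F2 x b)) /\
  (forall x, dgm_m1 A' (F1 x) = F1 (dgm_m1 A x)) /\
  (forall g h x b, dga_hom B g h b ->
      dgm_m1 A' (F2 x b) + dgm_act A' (F1 x) b =
      F1 (dgm_act A x b) - F2 (dgm_m1 A x) (b *~ zsign h) - F2 x (dga_mu1 B b)) /\
  (forall g h x a b, dga_hom B g h b ->
      - dgm_act A' (F2 x a) (b *~ zsign h) = F2 (dgm_act A x a) b - F2 x (a * b)).

(* F [box] id_DD, evaluated at x homogeneous of homological degree h; each
   term carries the homological degree of its A'-component. *)
Definition boxPhi (B B' : dgAlgebra) (A A' : dgModule B)
    (F1 : A -> A') (F2 : A -> B -> A') (dd : seq (ddterm B B')) (h : int) (x : A)
    : seq ((B' * A') * int) :=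
  ((1, F1 x), h) ::
  [seq ((dd_c t *~ zsign (dd_hc t * (1 + (h + dd_ha t - 1))), F2 x (dd_a t)),
        h + dd_ha t - 1) | t <- dd].

(* Phi, delta, delta' are given on homogeneous elements (of the indicated
   homological degree) as formal sums of pure tensors in B' (x)_I D', resp.
   B' (x)_I D, each term tagged with the homological degree of its second
   factor.  D, D' are left I-modules via their right I-actions. *)
Definition typeD_morphism (B B' : dgAlgebra) (D D' : dgModule B)
    (Phi : int -> D -> seq ((B' * D') * int))
    (delta : int -> D -> seq ((B' * D) * int))
    (delta' : int -> D' -> seq ((B' * D') * int)) : Prop :=
  let actD' i (y : D') := dgm_act D' y (dga_e B i) in
  let teq := tensor_eq (@actR B') actD' in
  let forget (s : seq ((B' * D') * int)) := map fst s in
  forall g h (x : D), dgm_hom D g h x ->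
    (forall y, dgm_hom D g h y ->
        teq (forget (Phi h (x + y))) (forget (Phi h x) ++ forget (Phi h y))) /\
    (forall i, teq (forget (Phi h (dgm_act D x (dga_e B i))))
                   [seq (dga_e B' i * p.1.1, p.1.2) | p <- Phi h x]) /\
    tensor_homog (@actR B') actD' (dga_hom B') (dgm_hom D') g h
       (forget (Phi h x)) /\
    (* (mu1 (x) |id|) Phi = (mu2 (x) id)(id (x) Phi) delta
                            - (mu2 (x) id)(id (x) delta') Phi *)
    teq [seq (dga_mu1 B' p.1.1, p.1.2 *~ zsign p.2) | p <- Phi h x]
        (flatten [seq [seq (p.1.1 * q.1.1, q.1.2) | q <- Phi p.2 p.1.2]
                    | p <- delta h x] ++
         [seq (- r.1, r.2) | r <- flatten
            [seq [seq (p.1.1 * q.1.1, q.1.2) | q <- delta' p.2 p.1.2]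
               | p <- Phi h x]]).

End Defs.
Arguments dgModule {k Gi} B.
Arguments ddterm {k Gi} B B'.
Arguments deltaD {k Gi B B'} dd A h x.

(* Both sides of each required identity are compared after pairing with an
   arbitrary I-balanced biadditive map phi, which is how equality in a tensor
   product over I is defined.  In the structure equation, for each term
   a_s (x) c_s of delta_DD(1) the summands built from F1 and from F2 composed
   with one further a_t cancel by the two A-infinity relations, up to
   F2(x, mu1 a_s) and F2(x, a_s a_t); together with the left-hand side these
   form the DD structure equation paired with (a, c) |-> phi(c, F2(x, a)).
   Since the signs in that pairing depend on the degrees of a and c, both
   factors are first twisted by (-1)^degree, using the decomposition into
   homogeneous components; this keeps the pairing balanced. *)

From HB Require Import structures.
From mathcomp Require Import all_boot all_order all_algebra zify.
From Stdlib Require Import IndefiniteDescription.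
From Stdlib Require List.
Set Implicit Arguments. Unset Strict Implicit. Unset Printing Implicit Defensive.
Import GRing.Theory.
Local Open Scope ring_scope.

Section AdditiveMaps.
Variables (M N : zmodType) (f : M -> N).
Hypothesis fB : forall x y, f (x - y) = f x - f y.

Definition additive_of : {additive M -> N} :=
  HB.pack f (GRing.isZmodMorphism.Build M N f fB).

Lemma additive0 : f 0 = 0. Proof. exact: (raddf0 additive_of). Qed.
Lemma additiveN x : f (- x) = - f x. Proof. exact: (raddfN additive_of). Qed.
Lemma additiveD x y : f (x + y) = f x + f y. Proof. exact: (raddfD additive_of). Qed.
Lemma additiveMz x n : f (x *~ n) = f x *~ n. Proof. exact: (raddfMz additive_of). Qed.
Lemma additive_sum (I : Type) (r : seq I) (F : I -> M) :
  f (\sum_(i <- r) F i) = \sum_(i <- r) f (F i).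
Proof. exact: (raddf_sum additive_of). Qed.
End AdditiveMaps.

Lemma eq_big_In (G : zmodType) (I : Type) (r : seq I) (F1 F2 : I -> G) :
  (forall t, List.In t r -> F1 t = F2 t) -> \sum_(t <- r) F1 t = \sum_(t <- r) F2 t.
Proof.
elim: r => [|a r IH] eqF; rewrite ?big_nil // !big_cons eqF /=; last by left.
by rewrite IH // => t rt; apply: eqF; right.
Qed.

Lemma sumr_termwise (G : zmodType) (I : Type) (r : seq I) (c : G)
    (L P R V S : I -> G) :
  (forall t, List.In t r -> P t + R t - (V t + S t) = L t) ->
  \sum_(t <- r) L t = c + \sum_(t <- r) P t + \sum_(t <- r) R t -
                      (c + \sum_(t <- r) V t + \sum_(t <- r) S t).
Proof.
move=> /eq_big_In <-; rewrite sumrB !big_split /=.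
by rewrite -[c + _ + _]addrA -[c + _ + \sum_(t <- r) S t]addrA [c + (_ + _)]addrC addrKA.
Qed.

Lemma big_partition_fst (G : zmodType) (K X : eqType) (s : seq (K * X))
    (F : K * X -> G) :
  \sum_(p <- s) F p = \sum_(d <- undup (map fst s)) \sum_(p <- s | p.1 == d) F p.
Proof.
symmetry; under eq_bigr do rewrite big_mkcond /=.
rewrite exchange_big /= [LHS]big_seq [RHS]big_seq; apply: eq_bigr => p ps.
rewrite -big_mkcond /= -big_filter.
have -> : [seq d <- undup (map fst s) | p.1 == d] = [:: p.1].
  rewrite (eq_filter (a2 := pred1 p.1)); last by move=> d /=; rewrite eq_sym.
  by apply: filter_pred1_uniq; rewrite ?undup_uniq // mem_undup map_f.
by rewrite big_seq1.
Qed.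

Section Graded.
Variables (Gi M : zmodType) (hom : Gi -> int -> M -> Prop).
Hypothesis gradedM : is_graded hom.

Lemma hom0 g h : hom g h 0. Proof. by case: gradedM. Qed.

Lemma homB g h x y : hom g h x -> hom g h y -> hom g h (x - y).
Proof. by case: gradedM => _ [+ _]; apply. Qed.

Lemma homN g h x : hom g h x -> hom g h (- x).
Proof. by move=> hx; rewrite -sub0r; apply: homB => //; apply: hom0. Qed.

Lemma homD g h x y : hom g h x -> hom g h y -> hom g h (x + y).
Proof. by move=> hx hy; rewrite -[y]opprK; apply/homB/homN. Qed.

Lemma hom_sum (I : Type) (r : seq I) (P : pred I) (F : I -> M) g h :
  (forall i, P i -> hom g h (F i)) -> hom g h (\sum_(i <- r | P i) F i).
Proof. by move=> homF; apply: big_ind => //; [apply: hom0 | apply: homD]. Qed.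

Lemma homMz g h x n : hom g h x -> hom g h (x *~ n).
Proof.
move=> hx; have homMn m : hom g h (x *+ m).
  by elim: m => [|m IH]; rewrite ?mulr0n ?mulrS; [apply: hom0 | apply: homD].
by case: n => n; rewrite ?NegzE ?mulrNz -pmulrn //; apply: homN.
Qed.

(* Components of equal bidegree are merged first, so that the uniqueness
   clause of [is_graded], which asks for distinct bidegrees, applies. *)
Lemma homog_sum0_weighted (w : Gi * int -> int) (s : seq ((Gi * int) * M)) :
  (forall p, p \in s -> hom p.1.1 p.1.2 p.2) -> \sum_(p <- s) p.2 = 0 ->
  \sum_(p <- s) p.2 *~ w p.1 = 0.
Proof.
move=> homs s0.
pose s' := [seq (d, \sum_(p <- s | p.1 == d) p.2) | d <- undup (map fst s)].
have keys_s' : map fst s' = undup (map fst s) by rewrite -map_comp map_id.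
have homs' p : p \in s' -> hom p.1.1 p.1.2 p.2.
  case/mapP=> d _ -> /=; rewrite big_seq_cond; apply: hom_sum => q.
  by case/andP=> qs /eqP <-; apply: homs.
have sum_s' : \sum_(p <- s') p.2 = 0 by rewrite big_map /= -big_partition_fst.
have comp0 := proj2 (proj2 (proj2 gradedM)) s'.
rewrite keys_s' in comp0; have {}comp0 := comp0 (undup_uniq _) homs' sum_s'.
rewrite (big_partition_fst s (fun p => p.2 *~ w p.1)) big_seq big1 // => d ds.
rewrite (eq_bigr (fun p => p.2 *~ w d)); last by move=> p /eqP ->.
rewrite -mulrz_suml.
have -> : \sum_(p <- s | p.1 == d) p.2 = 0 by apply: (comp0 (d, _)); apply: map_f.
by rewrite mul0rz.
Qed.

Definition homog_dec (x : M) : seq ((Gi * int) * M) :=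
  proj1_sig (constructive_indefinite_description _ (proj1 (proj2 (proj2 gradedM)) x)).

Lemma homog_decP x :
  (forall p, p \in homog_dec x -> hom p.1.1 p.1.2 p.2) /\
  x = \sum_(p <- homog_dec x) p.2.
Proof. by rewrite /homog_dec; case: constructive_indefinite_description. Qed.

(* [twist n] multiplies the component of homological degree h by (-1)^(n h);
   it turns signs depending on degrees into an additive operation. *)
Definition twist (n : int) (x : M) : M :=
  \sum_(p <- homog_dec x) p.2 *~ zsign (n * p.1.2).

Lemma twist_sum n s : (forall p, p \in s -> hom p.1.1 p.1.2 p.2) ->
  twist n (\sum_(p <- s) p.2) = \sum_(p <- s) p.2 *~ zsign (n * p.1.2).
Proof.
move=> homs; apply/eqP; rewrite -subr_eq0; apply/eqP.
have [homd sumd] := homog_decP (\sum_(p <- s) p.2).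
have := homog_sum0_weighted (fun q => zsign (n * q.2))
  (s := homog_dec (\sum_(p <- s) p.2) ++ [seq (p.1, - p.2) | p <- s]).
have sumN : \sum_(p <- s) (- p.2) *~ zsign (n * p.1.2) =
              - \sum_(p <- s) p.2 *~ zsign (n * p.1.2).
  by rewrite -sumrN; apply: eq_bigr => p _; rewrite mulNrz.
rewrite !big_cat !big_map /= sumN -sumd sumrN subrr; apply=> // p.
rewrite mem_cat => /orP [/homd //|/mapP [q qs ->] /=].
exact/homN/homs.
Qed.

Lemma twist_homog n g h x : hom g h x -> twist n x = x *~ zsign (n * h).
Proof.
move=> hx; have := twist_sum n (s := [:: ((g, h), x)]); rewrite !big_seq1; apply.
by move=> p; rewrite inE => /eqP ->.
Qed.

Lemma twistB n x y : twist n (x - y) = twist n x - twist n y.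
Proof.
have [homx sumx] := homog_decP x; have [homy sumy] := homog_decP y.
have -> : x - y =
          \sum_(p <- homog_dec x ++ [seq (p.1, - p.2) | p <- homog_dec y]) p.2.
  by rewrite big_cat big_map sumrN -sumx -sumy.
rewrite twist_sum; last first.
  move=> p; rewrite mem_cat => /orP [/homx //|/mapP [q qs ->] /=].
  exact/homN/homy.
rewrite big_cat big_map /= -sumrN; congr (_ + _).
by apply: eq_bigr => p _; rewrite mulNrz.
Qed.

Lemma twist_comm n (f : M -> M) : (forall x y, f (x - y) = f x - f y) ->
  (forall g h x, hom g h x -> hom g h (f x)) -> forall x, twist n (f x) = f (twist n x).
Proof.
move=> fB homf x; have [homx sumx] := homog_decP x.
have -> : f x = \sum_(p <- [seq (p.1, f p.2) | p <- homog_dec x]) p.2.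
  by rewrite big_map {1}sumx additive_sum.
rewrite twist_sum; last by move=> p /mapP [q qs ->] /=; apply/homf/homx.
rewrite big_map /twist additive_sum //; apply: eq_bigr => p _.
by rewrite additiveMz.
Qed.
End Graded.

Lemma zsignE n : zsign n = (-1) ^+ odd (absz n).
Proof. by rewrite /zsign signr_odd. Qed.

Lemma odd_abszD (a b : int) : odd (absz (a + b)) = odd (absz a) (+) odd (absz b).
Proof. lia. Qed.

Lemma odd_abszB (a b : int) : odd (absz (a - b)) = odd (absz a) (+) odd (absz b).
Proof. lia. Qed.

Lemma odd_abszN (a : int) : odd (absz (- a)) = odd (absz a).
Proof. lia. Qed.

Lemma odd_abszM (a b : int) : odd (absz (a * b)) = odd (absz a) && odd (absz b).
Proof. by rewrite abszM oddM. Qed.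

Ltac signs :=
  rewrite ?zsignE -?signr_addb ?(odd_abszD, odd_abszB, odd_abszN, odd_abszM) /=.

Section Tensor.
Variables (k : nat) (M N : zmodType) (actM : 'I_k -> M -> M) (actN : 'I_k -> N -> N).

Definition balanced (G : zmodType) (phi : M -> N -> G) : Prop :=
  [/\ forall x y z, phi (x - y) z = phi x z - phi y z,
      forall x y z, phi x (y - z) = phi x y - phi x z &
      forall i x y, phi (actM i x) y = phi x (actN i y)].

Lemma tensor_eqP (s t : seq (M * N)) :
  tensor_eq actM actN s t <->
  forall (G : zmodType) (phi : M -> N -> G), balanced phi ->
    \sum_(p <- s) phi p.1 p.2 = \sum_(p <- t) phi p.1 p.2.
Proof.
have sum_diff (G : zmodType) (phi : M -> N -> G) : balanced phi ->
    \sum_(p <- s ++ [seq (- p.1, p.2) | p <- t]) phi p.1 p.2 =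
    \sum_(p <- s) phi p.1 p.2 - \sum_(p <- t) phi p.1 p.2.
  case=> phiB _ _; rewrite big_cat big_map /= -sumrN; congr (_ + _).
  by apply: eq_bigr => p _; rewrite (additiveN (f := phi^~ p.2)).
split=> [eq_st G phi phi_bal | eq_st G phi phiBl phiBr phi_act].
  by apply/eqP; rewrite -subr_eq0 -sum_diff //; apply/eqP/eq_st; case: phi_bal.
by rewrite sum_diff; [apply/eqP; rewrite subr_eq0 eq_st | split].
Qed.
End Tensor.

Arguments dgm_hom {k Gi B} d _ _ _.
Arguments dgm_act {k Gi B} d _ _.
Arguments dgm_m1 {k Gi B} d _.
Arguments dga_hom {k Gi} d _ _ _.
Arguments dga_e {k Gi} d _.
Arguments dga_mu1 {k Gi} d _.
Arguments dga_ax {k Gi} d.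
Arguments dgm_ax {k Gi B} d.

Section DGAlgebra.
Variables (k : nat) (Gi : zmodType) (C : dgAlgebra k Gi).

Lemma dga_graded : is_graded (dga_hom C). Proof. by case: (dga_ax C). Qed.

Lemma dga_homM g h g' h' x y : dga_hom C g h x -> dga_hom C g' h' y ->
  dga_hom C (g + g') (h + h') (x * y).
Proof. by case: (dga_ax C) => _ [+ _]; apply. Qed.

Lemma dga_hom_idem (n : 'I_k -> int) : dga_hom C 0 0 (\sum_i dga_e C i *~ n i).
Proof. by case: (dga_ax C) => _ [_ [_ [_ [hom00 _]]]]; apply/hom00; exists n. Qed.

Lemma dga_hom1 : dga_hom C 0 0 1.
Proof.
case: (dga_ax C) => _ [_ [_ [<- _]]].
by have := dga_hom_idem (fun=> 1); under eq_bigr do rewrite mulr1z.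
Qed.

Lemma dga_hom_e i : dga_hom C 0 0 (dga_e C i).
Proof.
have := dga_hom_idem (fun j => (j == i)%:Z); rewrite (bigD1 i) //= eqxx mulr1z.
by rewrite big1 ?addr0 // => j /negbTE ->; rewrite mulr0z.
Qed.

Lemma dga_mu1B x y : dga_mu1 C (x - y) = dga_mu1 C x - dga_mu1 C y.
Proof. by case: (dga_ax C) => _ [_ [_ [_ [_ [_ [+ _]]]]]]; apply. Qed.

Lemma dga_mu1_homog g h x : dga_hom C g h x -> dga_hom C g (h + 1) (dga_mu1 C x).
Proof. by case: (dga_ax C) => _ [_ [_ [_ [_ [_ [_ [+ _]]]]]]]; apply. Qed.

Lemma dga_mu1_1 : dga_mu1 C 1 = 0.
Proof.
case: (dga_ax C) => _ [_ [_ [_ [_ [_ [_ [_ [_ leibniz]]]]]]]].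
have := leibniz 0 0 1 1 dga_hom1; rewrite !mul1r !mulr1 mulr1z => mu1_1.
by apply: (@addrI _ (dga_mu1 C 1)); rewrite addr0 -mu1_1.
Qed.

Lemma twist_mulr_e n i x :
  twist dga_graded n (x * dga_e C i) = twist dga_graded n x * dga_e C i.
Proof.
apply: (twist_comm _ _ (f := fun x => x * dga_e C i)) => [u v|g h u hu].
  exact: mulrBl.
by have := dga_homM hu (dga_hom_e i); rewrite !addr0.
Qed.
End DGAlgebra.

Lemma dgm_actBr (k : nat) (Gi : zmodType) (B : dgAlgebra k Gi) (M : dgModule B) y a b :
  dgm_act M y (a - b) = dgm_act M y a - dgm_act M y b.
Proof. by case: (dgm_ax M) => _ [_ [+ _]]; apply. Qed.

Section BoxTensor.
Variables (k : nat) (Gi : zmodType) (B B' : dgAlgebra k Gi) (A A' : dgModule B)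
    (dd : seq (ddterm B B')) (F1 : A -> A') (F2 : A -> B -> A').
Hypothesis DD : is_DD dd.
Hypothesis F_Ainf : is_Ainf_morphism F1 F2.

Lemma F1B x y : F1 (x - y) = F1 x - F1 y.
Proof. by case: F_Ainf. Qed.

Lemma F1_homog g h x : dgm_hom A g h x -> dgm_hom A' g h (F1 x).
Proof. by case: F_Ainf => _ [+ _]; apply. Qed.

Lemma F1_idem i x : F1 (dgm_act A x (dga_e B i)) = dgm_act A' (F1 x) (dga_e B i).
Proof. by case: F_Ainf => _ [_ [+ _]]; apply. Qed.

Lemma F2Bl x y b : F2 (x - y) b = F2 x b - F2 y b.
Proof. by case: F_Ainf => _ [_ [_ [+ _]]]; apply. Qed.

Lemma F2Br x a b : F2 x (a - b) = F2 x a - F2 x b.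
Proof. by case: F_Ainf => _ [_ [_ [_ [+ _]]]]; apply. Qed.

Lemma F2_idem_l i x b : F2 (dgm_act A x (dga_e B i)) b = F2 x (dga_e B i * b).
Proof. by case: F_Ainf => _ [_ [_ [_ [_ [+ _]]]]]; apply. Qed.

Lemma F2_idem_r i x b : F2 x (b * dga_e B i) = dgm_act A' (F2 x b) (dga_e B i).
Proof. by case: F_Ainf => _ [_ [_ [_ [_ [_ [+ _]]]]]]; apply. Qed.

Lemma F2_homog g h g' h' x b : dgm_hom A g h x -> dga_hom B g' h' b ->
  dgm_hom A' (g + g') (h + h' - 1) (F2 x b).
Proof. by case: F_Ainf => _ [_ [_ [_ [_ [_ [_ [+ _]]]]]]]; apply. Qed.

Lemma F1_m1 x : dgm_m1 A' (F1 x) = F1 (dgm_m1 A x).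
Proof. by case: F_Ainf => _ [_ [_ [_ [_ [_ [_ [_ [+ _]]]]]]]]; apply. Qed.

Lemma Ainf_rel_F1F2 g h x b : dga_hom B g h b ->
  dgm_m1 A' (F2 x b) + dgm_act A' (F1 x) b =
  F1 (dgm_act A x b) - F2 (dgm_m1 A x) (b *~ zsign h) - F2 x (dga_mu1 B b).
Proof. by case: F_Ainf => _ [_ [_ [_ [_ [_ [_ [_ [_ [+ _]]]]]]]]]; apply. Qed.

Lemma Ainf_rel_F2F2 g h x a b : dga_hom B g h b ->
  - dgm_act A' (F2 x a) (b *~ zsign h) = F2 (dgm_act A x a) b - F2 x (a * b).
Proof. by case: F_Ainf => _ [_ [_ [_ [_ [_ [_ [_ [_ [_ +]]]]]]]]]; apply. Qed.

Lemma dd_homog t : List.In t dd ->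
  [/\ dga_hom B (dd_ga t) (dd_ha t) (dd_a t), dga_hom B' (dd_gc t) (dd_hc t) (dd_c t),
      dd_ga t + dd_gc t = 0 & dd_ha t + dd_hc t = 1].
Proof. by case: DD => + _; apply. Qed.

Lemma dd_idem i : tensor_eq (@actR _ _ B) (@actR _ _ B')
  [seq (dga_e B i * dd_a t, dd_c t) | t <- dd]
  [seq (dd_a t, dga_e B' i * dd_c t) | t <- dd].
Proof. by case: DD => _ [+ _]; apply. Qed.

Lemma dd_structure_eq : tensor_zero (@actR _ _ B) (@actR _ _ B')
  ([seq (dga_mu1 B (dd_a t) *~ zsign (dd_hc t), dd_c t) | t <- dd] ++
   [seq (dd_a t, dga_mu1 B' (dd_c t)) | t <- dd] ++
   [seq (dd_a s * dd_a t *~ zsign (dd_ha t * dd_hc s), dd_c s * dd_c t)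
      | s <- dd, t <- dd]).
Proof. by case: DD => _ [_ +]. Qed.

(* The sign carried by [c_t] both in [deltaD] and in [boxPhi] at degree [n]. *)
Definition ddsign (t : ddterm B B') (n : int) : int := zsign ((n + dd_ha t) * dd_hc t).

Lemma ddsign_boxPhi t n : zsign (dd_hc t * (1 + (n + dd_ha t - 1))) = ddsign t n.
Proof. by rewrite /ddsign mulrC addrC subrK. Qed.

Section DDSigns.
Variable t : ddterm B B'.
Hypothesis deg_t : dd_ha t + dd_hc t = 1.

Lemma dd_hcE : dd_hc t = 1 - dd_ha t. Proof. lia. Qed.

Lemma ddsignE n : ddsign t n = zsign (n * dd_hc t).
Proof.
rewrite /ddsign dd_hcE; signs.
by case: (odd (absz n)); case: (odd (absz (dd_ha t))).
Qed.

Lemma ddsignS n : ddsign t (n + 1) + ddsign t n * zsign (dd_ha t) = 0.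
Proof.
rewrite /ddsign dd_hcE; signs.
by case: (odd (absz n)); case: (odd (absz (dd_ha t))).
Qed.

Lemma ddsignSl n : zsign (dd_ha t) * ddsign t (n + 1) + ddsign t n = 0.
Proof.
rewrite /ddsign dd_hcE; signs.
by case: (odd (absz n)); case: (odd (absz (dd_ha t))).
Qed.
End DDSigns.

Let actD' i (y : A') := dgm_act A' y (dga_e B i).

Lemma boxPhiD h x y : tensor_eq (@actR _ _ B') actD'
  (map fst (boxPhi F1 F2 dd h (x + y)))
  (map fst (boxPhi F1 F2 dd h x) ++ map fst (boxPhi F1 F2 dd h y)).
Proof.
apply/tensor_eqP => G phi [_ phiB _].
rewrite /boxPhi /= !big_cons big_cat big_cons !big_map /= (additiveD F1B).
rewrite (additiveD (phiB 1)).
under eq_bigr do rewrite (additiveD (fun u v => F2Bl u v _)) (additiveD (phiB _)).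
by rewrite big_split /= addrACA [RHS]addrA.
Qed.

Lemma boxPhi_idem h x i : tensor_eq (@actR _ _ B') actD'
  (map fst (boxPhi F1 F2 dd h (dgm_act A x (dga_e B i))))
  [seq (dga_e B' i * p.1.1, p.1.2) | p <- boxPhi F1 F2 dd h x].
Proof.
apply/tensor_eqP => G phi [phiBl phiBr phi_act].
rewrite /boxPhi /= !big_cons !big_map /=.
congr (_ + _); first by rewrite F1_idem -phi_act /actR mul1r mulr1.
under eq_bigr do rewrite F2_idem_l.
(* The sign of the [t]-th term is [(-1)^(h deg c_t)], i.e. the [h]-twist of [c_t]. *)
pose psi a c := phi (twist (dga_graded B') h c) (F2 x a).
have psi_bal : balanced (@actR _ _ B) (@actR _ _ B') psi.
  split=> [u v w|u v w|j u v]; rewrite /psi.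
  - by rewrite F2Br phiBr.
  - by rewrite twistB phiBl.
  - by rewrite /actR F2_idem_r -phi_act /actR twist_mulr_e.
have := (tensor_eqP _ _ _ _).1 (dd_idem i) G psi psi_bal; rewrite !big_map /=.
rewrite /psi => sum_eq; rewrite -[LHS]/(\sum_(t <- dd) _).
transitivity (\sum_(t <- dd) phi (twist (dga_graded B') h (dd_c t))
                                (F2 x (dga_e B i * dd_a t))).
  apply: eq_big_In => t /dd_homog [_ hc _ deg_t].
  by rewrite (twist_homog _ _ hc) ddsign_boxPhi ddsignE.
rewrite sum_eq; apply: eq_big_In => t /dd_homog [_ hc _ deg_t].
rewrite (twist_homog _ _ (dga_homM (dga_hom_e B' i) hc)) add0r.
by rewrite ddsign_boxPhi ddsignE // mulrzAr.
Qed.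

Lemma boxPhi_homog g h x : dgm_hom A g h x ->
  tensor_homog (@actR _ _ B') actD' (dga_hom B') (dgm_hom A') g h
    (map fst (boxPhi F1 F2 dd h x)).
Proof.
move=> hx.
exists (((1, F1 x), ((0, 0), (g, h))) ::
  [seq ((dd_c t *~ zsign (dd_hc t * (1 + (h + dd_ha t - 1))), F2 x (dd_a t)),
        ((dd_gc t, dd_hc t), (g + dd_ga t, h + dd_ha t - 1))) | t <- dd]).
split; last by apply/tensor_eqP => G phi _; rewrite /boxPhi /= !big_cons !big_map.
move=> p /= [<- | /List.in_map_iff [t [<- /dd_homog [ha hc deg_gt deg_ht]]]] /=.
  by split; rewrite ?add0r //; [apply: dga_hom1 | apply: F1_homog].
split; [exact: (homMz (dga_graded B') _ hc) | exact: F2_homog | | lia].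
by rewrite addrCA [dd_gc t + _]addrC deg_gt addr0.
Qed.

Section AdditiveAinfRelations.
Variables (G : zmodType) (f : A' -> G).
Hypothesis fB : forall y y', f (y - y') = f y - f y'.

Lemma additive_Ainf_F1F2 x a g ha s s' : dga_hom B g ha a -> s' + s * zsign ha = 0 ->
  f (F2 (dgm_m1 A x) a) *~ s' + f (F1 (dgm_act A x a)) *~ s -
  (f (dgm_act A' (F1 x) a) *~ s + f (dgm_m1 A' (F2 x a)) *~ s) =
  f (F2 x (dga_mu1 B a)) *~ s.
Proof.
move=> homa /eqP; rewrite addr_eq0 => /eqP ->.
have -> : F1 (dgm_act A x a) = dgm_m1 A' (F2 x a) + dgm_act A' (F1 x) a +
                              F2 x (dga_mu1 B a) + F2 (dgm_m1 A x) a *~ zsign ha.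
  by rewrite -(additiveMz (F2Br _)) (Ainf_rel_F1F2 _ homa) !subrK.
rewrite !(additiveD fB) (additiveMz fB) !mulrzDl mulrzA_C mulrNz.
rewrite [_ + _ *~ (s * _)]addrC addKr addrAC.
by rewrite [X in _ - X]addrC subrr add0r.
Qed.

Lemma additive_Ainf_F2F2 x a b g hb s s' : dga_hom B g hb b -> zsign hb * s + s' = 0 ->
  f (F2 (dgm_act A x a) b) *~ s - f (dgm_act A' (F2 x a) b) *~ s' =
  f (F2 x (a * b)) *~ s.
Proof.
move=> homb /eqP; rewrite addrC addr_eq0 => /eqP ->.
have -> : F2 (dgm_act A x a) b =
          F2 x (a * b) - dgm_act A' (F2 x a) b *~ zsign hb.
  by rewrite -(additiveMz (dgm_actBr _)) (Ainf_rel_F2F2 _ _ homb) addrC subrK.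
by rewrite fB (additiveMz fB) mulrzBl -mulrzA mulrNz opprK subrK.
Qed.
End AdditiveAinfRelations.

Section StructureEquation.
Variables (h : int) (x : A) (G : zmodType) (phi : B' -> A' -> G).
Hypothesis phi_bal : balanced (@actR _ _ B') actD' phi.

Let phiBl : forall c c' y, phi (c - c') y = phi c y - phi c' y.
Proof. by case: phi_bal. Qed.
Let phiBr : forall c y y', phi c (y - y') = phi c y - phi c y'.
Proof. by case: phi_bal. Qed.
Let phiMzl c n y : phi (c *~ n) y = phi c y *~ n.
Proof. exact: (additiveMz (f := phi^~ y)). Qed.
Let phiMzr c y n : phi c (y *~ n) = phi c y *~ n.
Proof. exact: additiveMz. Qed.

Definition dd_defect (t : ddterm B B') : G :=
  phi (dd_c t) (F2 x (dga_mu1 B (dd_a t))) *~ ddsign t h +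
  \sum_(u <- dd) phi (dd_c t * dd_c u) (F2 x (dd_a t * dd_a u))
                   *~ (ddsign t h * ddsign u (h + dd_ha t)).

(* The DD structure equation, paired with [F2 x] through the balanced map
   [(a, c) |-> phi (twist h c) (F2 x (twist 1 a))]. *)
Lemma dd_structure_pairing :
  \sum_(t <- dd) phi (dga_mu1 B' (dd_c t)) (F2 x (dd_a t))
                   *~ (zsign (h + dd_ha t - 1) * ddsign t h) =
  \sum_(t <- dd) dd_defect t.
Proof.
pose psi a c := phi (twist (dga_graded B') h c) (F2 x (twist (dga_graded B) 1 a)).
have [psiBl psiBr psi_act] : balanced (@actR _ _ B) (@actR _ _ B') psi.
  split=> [a a' c|a c c'|i a c]; rewrite /psi.
  - by rewrite twistB F2Br phiBr.
  - by rewrite twistB phiBl.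
  - by case: phi_bal => _ _ phi_act; rewrite /actR !twist_mulr_e F2_idem_r -phi_act.
have := dd_structure_eq psiBl psiBr psi_act.
rewrite !big_cat !big_map !big_allpairs_dep /=.
have -> : \sum_(t <- dd) psi (dga_mu1 B (dd_a t) *~ zsign (dd_hc t)) (dd_c t) =
          \sum_(t <- dd) phi (dd_c t) (F2 x (dga_mu1 B (dd_a t))) *~ ddsign t h.
  apply: eq_big_In => t /dd_homog [ha hc _ deg_t].
  rewrite /psi (twist_homog _ _ hc).
  rewrite (twist_homog _ _ (homMz (dga_graded B) _ (dga_mu1_homog ha))).
  rewrite !(additiveMz (F2Br _)) phiMzl !phiMzr -!mulrzA; congr (_ *~ _).
  rewrite /ddsign (dd_hcE deg_t); signs.
  by case: (odd (absz h)); case: (odd (absz (dd_ha t))).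
have -> : \sum_(t <- dd) psi (dd_a t) (dga_mu1 B' (dd_c t)) =
          - \sum_(t <- dd) phi (dga_mu1 B' (dd_c t)) (F2 x (dd_a t))
                            *~ (zsign (h + dd_ha t - 1) * ddsign t h).
  rewrite -sumrN; apply: eq_big_In => t /dd_homog [ha hc _ deg_t].
  rewrite /psi (twist_homog _ _ ha) (twist_homog _ _ (dga_mu1_homog hc)).
  rewrite !(additiveMz (F2Br _)) phiMzl !phiMzr -!mulrzA -mulrNz; congr (_ *~ _).
  rewrite /ddsign (dd_hcE deg_t); signs.
  by case: (odd (absz h)); case: (odd (absz (dd_ha t))).
have -> : \sum_(t <- dd) \sum_(u <- dd)
            psi (dd_a t * dd_a u *~ zsign (dd_ha u * dd_hc t)) (dd_c t * dd_c u) =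
          \sum_(t <- dd) \sum_(u <- dd) phi (dd_c t * dd_c u) (F2 x (dd_a t * dd_a u))
                                         *~ (ddsign t h * ddsign u (h + dd_ha t)).
  apply: eq_big_In => t /dd_homog [ha hc _ deg_t].
  apply: eq_big_In => u /dd_homog [ha' hc' _ deg_u].
  rewrite /psi (twist_homog _ _ (dga_homM hc hc')).
  rewrite (twist_homog _ _ (homMz (dga_graded B) _ (dga_homM ha ha'))).
  rewrite !(additiveMz (F2Br _)) phiMzl !phiMzr -!mulrzA; congr (_ *~ _).
  rewrite /ddsign (dd_hcE deg_t) (dd_hcE deg_u); signs.
  by case: (odd (absz h)); case: (odd (absz (dd_ha t))); case: (odd (absz (dd_ha u))).
rewrite /dd_defect big_split /= addrCA addrC => /eqP.
by rewrite subr_eq0 => /eqP <-.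
Qed.

Lemma boxPhi_structure_pairing :
  \sum_(p <- boxPhi F1 F2 dd h x) phi (dga_mu1 B' p.1.1) (p.1.2 *~ zsign p.2) =
  \sum_(p <- deltaD dd A h x) \sum_(q <- boxPhi F1 F2 dd p.2 p.1.2)
     phi (p.1.1 * q.1.1) q.1.2 -
  \sum_(p <- boxPhi F1 F2 dd h x) \sum_(q <- deltaD dd A' p.2 p.1.2)
     phi (p.1.1 * q.1.1) q.1.2.
Proof.
rewrite /boxPhi /deltaD !big_cons !big_map /= dga_mu1_1.
rewrite (additive0 (f := phi^~ _)) // add0r mulr1 F1_m1.
rewrite -[LHS]/(\sum_(t <- dd) _).
have -> : \sum_(t <- dd)
    phi (dga_mu1 B' (dd_c t *~ zsign (dd_hc t * (1 + (h + dd_ha t - 1)))))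
      (F2 x (dd_a t) *~ zsign (h + dd_ha t - 1)) = \sum_(t <- dd) dd_defect t.
  rewrite -dd_structure_pairing; apply: eq_big_In => t _.
  by rewrite (additiveMz (@dga_mu1B _ _ B')) phiMzl phiMzr ddsign_boxPhi -mulrzA.
apply: sumr_termwise => t /dd_homog [ha hc _ deg_t].
rewrite !big_cons !big_map /= !mul1r !mulr1 !phiMzl -/(ddsign t h) !ddsign_boxPhi.
rewrite /dd_defect addrA [_ + (_ + \sum_(j <- dd) _)]addrA opprD addrACA.
congr (_ + _).
  exact: (additive_Ainf_F1F2 (phiBr _) x ha (ddsignS deg_t h)).
rewrite -sumrB; apply: eq_big_In => u /dd_homog [ha' hc' _ deg_u].
rewrite !mulrzAl !mulrzAr !phiMzl ddsign_boxPhi -/(ddsign u (h + dd_ha t - 1)).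
rewrite -!mulrzA ![_ * ddsign t h]mulrC.
have sign_eq : zsign (dd_ha u) * (ddsign t h * ddsign u (h + dd_ha t)) +
               ddsign t h * ddsign u (h + dd_ha t - 1) = 0.
  by rewrite mulrCA -mulrDr -{1}(subrK 1 (h + dd_ha t)) ddsignSl // mulr0.
exact: (additive_Ainf_F2F2 (phiBr _) x (dd_a t) ha' sign_eq).
Qed.
End StructureEquation.

Lemma boxPhi_structure h x : tensor_eq (@actR _ _ B') actD'
  [seq (dga_mu1 B' p.1.1, p.1.2 *~ zsign p.2) | p <- boxPhi F1 F2 dd h x]
  (flatten [seq [seq (p.1.1 * q.1.1, q.1.2) | q <- boxPhi F1 F2 dd p.2 p.1.2]
              | p <- deltaD dd A h x] ++
   [seq (- r.1, r.2) | r <- flatten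
      [seq [seq (p.1.1 * q.1.1, q.1.2) | q <- deltaD dd A' p.2 p.1.2]
         | p <- boxPhi F1 F2 dd h x]]).
Proof.
apply/tensor_eqP => G phi phi_bal.
rewrite big_map boxPhi_structure_pairing // big_cat; congr (_ + _).
  by rewrite big_flatten big_map; apply: eq_bigr => p _; rewrite big_map.
rewrite big_map big_flatten big_map -sumrN; apply: eq_bigr => p _.
rewrite big_map -sumrN; apply: eq_bigr => q _.
by case: phi_bal => phiBl _ _; rewrite (additiveN (f := phi^~ _)).
Qed.
End BoxTensor.

Theorem proposition6p50 (k : nat) (Gi : zmodType)
    (B B' : dgAlgebra k Gi) (A A' : dgModule B)
    (dd : seq (ddterm B B')) (F1 : A -> A') (F2 : A -> B -> A') :
  is_DD dd ->
  is_Ainf_morphism F1 F2 ->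
  typeD_morphism (boxPhi F1 F2 dd) (deltaD dd A) (deltaD dd A').
Proof.
move=> DD F_Ainf g h x hx; split; first by move=> y _; apply: boxPhiD.
split; first by move=> i; apply: boxPhi_idem.
split; first exact: boxPhi_homog.
exact: boxPhi_structure.
Qed.
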